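(* Let $P=\{x\in\mathbb{R}^n: Ax\ge b\}$ with rational data be full-dimensional and pointed, let $\mathcal{I}\subseteq\{1,\dots,n\}$ and $P_I=\{x\in P: x_j\in\mathbb{Z}\text{ for all } j\in\mathcal{I}\}$. Let $\mathcal{P},\mathcal{R}\subset\mathbb{R}^n$ be finite sets of points and rays. Then the point-ray collection $(\mathcal{P},\mathcal{R})$ is proper if and only if $P_I\subseteq \operatorname{conv}(\mathcal{P})+\operatorname{cone}(\mathcal{R})$.
   Context: The point-ray linear program (PRLP) for $(\mathcal{P},\mathcal{R})$ has feasible region $\{(\alpha,\beta)\in\mathbb{R}^n\times\mathbb{R}: \alpha^\top p\ge\beta\ \forall p\in\mathcal{P},\ \alpha^\top r\ge 0\ \forall r\in\mathcal{R}\}$. The collection $(\mathcal{P},\mathcal{R})$ is called proper if $\alpha^\top x\ge\beta$ is a valid inequality for $P_I$ whenever $(\alpha,\beta)$ is feasible for the PRLP. *)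

From HB Require Import structures.
From mathcomp Require Import all_boot all_order all_algebra.
From mathcomp Require Import reals.
Set Implicit Arguments. Unset Strict Implicit. Unset Printing Implicit Defensive.
Import Order.TTheory GRing.Theory Num.Theory.
Local Open Scope ring_scope.

Section Defs.
Variable R : realType.

Definition dotv n (a x : 'cV[R]_n) : R := \sum_(i < n) a i 0 * x i 0.

Definition in_poly m n (A : 'M[R]_(m, n)) (b : 'cV[R]_m) (x : 'cV[R]_n) : Prop :=
  forall i, b i 0 <= (A *m x) i 0.

Definition rational_mx m n (A : 'M[R]_(m, n)) : Prop :=
  forall i j, exists q : rat, A i j = ratr q.

Definition in_PI m n (A : 'M[R]_(m, n)) (b : 'cV[R]_m) (I : {set 'I_n})
  (x : 'cV[R]_n) : Prop :=
  in_poly A b x /\ (forall j, j \in I -> x j 0 \is a Num.int).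

Definition full_dim m n (A : 'M[R]_(m, n)) (b : 'cV[R]_m) : Prop :=
  exists p : 'I_n.+1 -> 'cV[R]_n,
    (forall i, in_poly A b (p i)) /\
    \rank (\matrix_(i < n, j < n) (p (lift ord0 i) j 0 - p ord0 j 0)) = n.

Definition pointed m n (A : 'M[R]_(m, n)) (b : 'cV[R]_m) : Prop :=
  ~ exists (x d : 'cV[R]_n),
      [/\ in_poly A b x, d != 0 & forall t : R, in_poly A b (x + t *: d)].

Definition in_conv_cone n k l (pts : 'I_k -> 'cV[R]_n) (rays : 'I_l -> 'cV[R]_n)
  (x : 'cV[R]_n) : Prop :=
  exists (lam : 'I_k -> R) (mu : 'I_l -> R),
    [/\ forall i, 0 <= lam i, \sum_i lam i = 1, forall j, 0 <= mu j &
        x = \sum_i lam i *: pts i + \sum_j mu j *: rays j].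

Definition prlp_feasible n k l (pts : 'I_k -> 'cV[R]_n) (rays : 'I_l -> 'cV[R]_n)
  (alpha : 'cV[R]_n) (beta : R) : Prop :=
  (forall i, beta <= dotv alpha (pts i)) /\ (forall j, 0 <= dotv alpha (rays j)).

Definition proper_collection m n k l (A : 'M[R]_(m, n)) (b : 'cV[R]_m)
  (I : {set 'I_n}) (pts : 'I_k -> 'cV[R]_n) (rays : 'I_l -> 'cV[R]_n) : Prop :=
  forall alpha beta, prlp_feasible pts rays alpha beta ->
    forall x, in_PI A b I x -> beta <= dotv alpha x.
End Defs.

(* Encode a point p as (p, 1), a ray r as (r, 0) and an inequality
   alpha^T x >= beta as (alpha, beta).  Feasibility for the PRLP and validity
   at x then both say that the pairing alpha^T p - beta s is nonnegative, so by
   Farkas' lemma x satisfies every PRLP-feasible inequality iff (x, 1) is a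
   nonnegative combination of the encoded generators, i.e. iff
   x lies in conv(P) + cone(R).  Applying this to every point of P_I gives the
   equivalence.  Farkas' lemma itself holds for linear forms on any module over an
   ordered field, by eliminating one constraint at a time. *)

From HB Require Import structures.
From mathcomp Require Import all_boot all_order all_algebra.
From mathcomp Require Import reals.
From mathcomp Require Import ring.
From Stdlib Require Import Classical.
Set Implicit Arguments. Unset Strict Implicit. Unset Printing Implicit Defensive.
Import Order.TTheory GRing.Theory Num.Theory.
Local Open Scope ring_scope.

Section Farkas.
Variables (R : realFieldType) (V : lmodType R).
Implicit Types (g h : V -> R) (u v : V).

Definition conic_comb (I : finType) (f : I -> V -> R) g :=
  exists2 lam : I -> R, (forall i, 0 <= lam i) & forall v, g v = \sum_i lam i * f i v.

Lemma scalarN h v : scalar h -> h (- v) = - h v.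
Proof. by move=> Lh; rewrite -scaleN1r (scalable_linear Lh); apply: mulN1r. Qed.

Lemma scalarBZ h u v t : scalar h -> h (u - t *: v) = h u - t * h v.
Proof. by move=> Lh; rewrite (zmod_morphism_linear Lh) (scalable_linear Lh). Qed.

Lemma scalar_comp h (p : V -> V) : scalar h -> linear p -> scalar (h \o p).
Proof. by move=> Lh Lp a u v /=; rewrite Lp Lh. Qed.

Definition proj_ker h v0 v := v - (h v / h v0) *: v0.

Lemma proj_ker_linear h v0 : scalar h -> linear (proj_ker h v0).
Proof.
move=> Lh a u v; rewrite /proj_ker Lh mulrDl -mulrA scalerDl scalerBr scalerA.
by rewrite opprD addrACA.
Qed.

Lemma proj_kerK h v0 v : scalar h -> h v0 != 0 -> h (proj_ker h v0 v) = 0.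
Proof. by move=> Lh hv0; rewrite scalarBZ // divfK // subrr. Qed.

Lemma conic_comb0 (f : 'I_0 -> V -> R) g : scalar g -> (forall v, 0 <= g v) ->
  conic_comb f g.
Proof.
move=> Lg g_ge0; exists (fun=> 0) => // v; rewrite big_ord0.
by apply/eqP; rewrite eq_le g_ge0 -oppr_ge0 -scalarN ?g_ge0.
Qed.

Lemma conic_combS m (f : 'I_m.+1 -> V -> R) g c : 0 <= c ->
  conic_comb (f \o lift ord0) (fun v => g v - c * f ord0 v) -> conic_comb f g.
Proof.
move=> c_ge0 [lam lam_ge0 g_eq].
exists (fun i => if unlift ord0 i is Some j then lam j else c).
  by move=> i; case: (unlift ord0 i).
move=> v; rewrite big_ord_recl unlift_none addrC -[g v](subrK (c * f ord0 v)).
by congr (_ + _); rewrite g_eq; apply: eq_bigr => j _; rewrite liftK.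
Qed.

Section Step.
Variables (m : nat) (f : 'I_m.+1 -> V -> R) (g : V -> R).
Hypotheses (f_scalar : forall i, scalar (f i)) (g_scalar : scalar g).
Hypothesis fg : forall v, (forall i, 0 <= f i v) -> 0 <= g v.
Hypothesis IH : forall (f' : 'I_m -> V -> R) g',
  (forall i, scalar (f' i)) -> scalar g' ->
  (forall v, (forall i, 0 <= f' i v) -> 0 <= g' v) -> conic_comb f' g'.

Local Notation f0 := (f ord0).
Local Notation f' := (f \o lift ord0).

Lemma conic_comb_drop :
  (forall v, (forall j, 0 <= f' j v) -> 0 <= g v) -> conic_comb f g.
Proof.
move=> f'g; apply: (conic_combS (le_refl 0)); apply: IH => [j|a u v|v /f'g].
- exact: f_scalar.
- by rewrite !mul0r !subr0 g_scalar.
- by rewrite mul0r subr0.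
Qed.

(* Here f0 v0 < 0, and projecting along v0 onto ker f0 leaves a system with
   one constraint fewer whose certificate lifts back. *)
Lemma conic_comb_elim v0 : (forall j, 0 <= f' j v0) -> g v0 < 0 -> conic_comb f g.
Proof.
move=> f'v0_ge0 gv0_lt0.
have f0v0_lt0 : f0 v0 < 0.
  rewrite ltNge; apply/negP => f0v0_ge0; move: gv0_lt0; rewrite ltNge fg //.
  by move=> i; case: (unliftP ord0 i) => [j ->|->] //; apply: f'v0_ge0.
have f0v0_neq0 : f0 v0 != 0 by rewrite lt_eqF.
pose pi := proj_ker f0 v0.
have pi_linear : linear pi by apply: proj_ker_linear.
have [lam lam_ge0 gpi_eq] : conic_comb (fun j => f' j \o pi) (g \o pi).
  apply: IH => [j||v f'pi_ge0]; first by apply: scalar_comp => //; apply: f_scalar.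
    exact: scalar_comp.
  apply: fg => i; case: (unliftP ord0 i) => [j ->|->]; first exact: f'pi_ge0.
  by rewrite /pi /= proj_kerK.
pose S := \sum_j lam j * f' j v0.
have S_ge0 : 0 <= S by apply: sumr_ge0 => j _; apply: mulr_ge0.
apply: (conic_combS (c := (g v0 - S) / f0 v0)).
  apply: mulr_le0; last by rewrite invr_le0 ltW.
  by rewrite subr_le0 (le_trans (ltW gv0_lt0)).
exists lam => // v; have := gpi_eq v; rewrite /= /pi /proj_ker scalarBZ //.
set t := f0 v / f0 v0.
under eq_bigr do rewrite scalarBZ ?f_scalar // mulrBr mulrCA.
rewrite sumrB -mulr_sumr -/S => gpi_v.
have -> : \sum_j lam j * f' j v = g v - t * g v0 + t * S by rewrite gpi_v subrK.
by rewrite /t; field.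
Qed.

End Step.

Lemma farkas_ord m (f : 'I_m -> V -> R) g :
  (forall i, scalar (f i)) -> scalar g ->
  (forall v, (forall i, 0 <= f i v) -> 0 <= g v) -> conic_comb f g.
Proof.
elim: m f g => [|m IH] f g Lf Lg fg.
  by apply: conic_comb0 => // v; apply: fg => -[].
have [[v0 [f'v0_ge0 gv0_lt0]]|no_v0] :=
  classic (exists v0, (forall j, 0 <= f (lift ord0 j) v0) /\ g v0 < 0).
  exact: (conic_comb_elim Lf Lg fg IH f'v0_ge0 gv0_lt0).
apply: (conic_comb_drop Lf Lg IH) => v f'v_ge0; rewrite leNgt; apply/negP => gv_lt0.
by apply: no_v0; exists v.
Qed.

Lemma farkas (I : finType) (f : I -> V -> R) g :
  (forall i, scalar (f i)) -> scalar g ->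
  (forall v, (forall i, 0 <= f i v) -> 0 <= g v) -> conic_comb f g.
Proof.
move=> Lf Lg fg; have [lam lam_ge0 g_eq] : conic_comb (f \o @enum_val I I) g.
  apply: farkas_ord => // [i|v fv_ge0]; first exact: Lf.
  by apply: fg => i; rewrite -(enum_rankK i); apply: fv_ge0.
exists (lam \o enum_rank) => [i|v]; first exact: lam_ge0.
rewrite g_eq (reindex (@enum_val I I)) /=; last exact/onW_bij/enum_val_bij.
by apply: eq_bigr => i _; rewrite /= enum_valK.
Qed.

End Farkas.

Section PointRay.
Variables (R : realType) (n : nat).
Local Notation vec := 'cV[R]_n.
Implicit Types (a x : vec) (c q : vec * R^o).

Lemma dotvC a x : dotv a x = dotv x a.
Proof. by apply: eq_bigr => i _; rewrite mulrC. Qed.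

Lemma dotv_is_scalar a : scalar (dotv a).
Proof.
move=> t u v; rewrite /dotv mulr_sumr -big_split; apply: eq_bigr => i _.
by rewrite !mxE mulrDr mulrCA.
Qed.

HB.instance Definition _ a :=
  GRing.isLinear.Build R vec R *%R (dotv a) (dotv_is_scalar a).

Lemma dotv_delta i x : dotv (delta_mx i 0) x = x i 0.
Proof.
rewrite /dotv (bigD1 i) //= big1 ?addr0 => [|j /negbTE ji].
  by rewrite mxE !eqxx mul1r.
by rewrite mxE ji mul0r.
Qed.

Definition hdot c q : R := dotv c.1 q.1 - c.2 * q.2.

Lemma hdotC c q : hdot c q = hdot q c.
Proof. by rewrite /hdot dotvC mulrC. Qed.

Lemma hdot_is_scalar c : scalar (hdot c).
Proof.
by move=> t q q'; rewrite /hdot /= linearD linearZ /= -[t *: q.2]/(t * q.2); ring.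
Qed.

HB.instance Definition _ c :=
  GRing.isLinear.Build R (vec * R^o)%type R *%R (hdot c) (hdot_is_scalar c).

Lemma hdot_scalar_l q : scalar (hdot^~ q).
Proof. by move=> t c c'; rewrite !(hdotC _ q) linearP. Qed.

Lemma hdot_inj q q' : (forall c, hdot c q = hdot c q') -> q = q'.
Proof.
case: q q' => [u s] [u' s'] eq_hdot; congr (_, _).
  apply/matrixP => i j; rewrite (ord1 j).
  by have := eq_hdot (delta_mx i 0, 0); rewrite /hdot /= !dotv_delta !mul0r !subr0.
by have := eq_hdot (0, 1); rewrite /hdot /= !(dotvC 0) !linear0 !mul1r !sub0r => /oppr_inj.
Qed.

Variables (k l : nat) (pts : 'I_k -> vec) (rays : 'I_l -> vec).

Definition prlp_gen (i : 'I_k + 'I_l) : vec * R^o :=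
  match i with inl i => (pts i, 1) | inr j => (rays j, 0) end.

Lemma prlp_feasibleE alpha beta : prlp_feasible pts rays alpha beta <->
  forall i, 0 <= hdot (alpha, beta) (prlp_gen i).
Proof.
rewrite /hdot /=; split=> [[pts_ok rays_ok] [i|j] /=|feas].
- by rewrite mulr1 subr_ge0 pts_ok.
- by rewrite mulr0 subr0 rays_ok.
split=> [i|j]; first by have := feas (inl i); rewrite /= mulr1 subr_ge0.
by have := feas (inr j); rewrite /= mulr0 subr0.
Qed.

Lemma in_conv_cone_gen x : in_conv_cone pts rays x <->
  exists2 w : 'I_k + 'I_l -> R, (forall i, 0 <= w i) & (x, 1) = \sum_i w i *: prlp_gen i.
Proof.
have sum_gen w : \sum_i w i *: prlp_gen i =
    (\sum_i w (inl i) *: pts i + \sum_j w (inr j) *: rays j, \sum_i w (inl i)).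
  rewrite [LHS]surjective_pairing big_sumType /= !raddf_sum /=; congr (_, _).
  rewrite [X in _ + X]big1 ?addr0 => [|j _]; last exact: mulr0.
  by apply: eq_bigr => i _; apply: mulr1.
split=> [[lam [mu [lam_ge0 lam1 mu_ge0 ->]]]|[w w_ge0]].
  exists (fun i => match i with inl i => lam i | inr j => mu j end) => [[]|] //.
  by rewrite sum_gen lam1.
rewrite sum_gen => -[-> sum1]; exists (w \o inl), (w \o inr); split=> // i; apply: w_ge0.
Qed.

Lemma in_conv_cone_prlp_valid x : in_conv_cone pts rays x <->
  forall alpha beta, prlp_feasible pts rays alpha beta -> beta <= dotv alpha x.
Proof.
have validE alpha beta : (beta <= dotv alpha x) = (0 <= hdot (alpha, beta) (x, 1)).
  by rewrite /hdot mulr1 subr_ge0.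
rewrite in_conv_cone_gen; split=> [[w w_ge0 x_gen] alpha beta /prlp_feasibleE feas|valid].
  rewrite validE x_gen linear_sum; apply: sumr_ge0 => i _; rewrite linearZ.
  exact: mulr_ge0 (w_ge0 i) (feas i).
have [w w_ge0 x_eq] : conic_comb (fun i => hdot^~ (prlp_gen i)) (hdot^~ (x, 1)).
  apply: farkas => [i||[alpha beta] feas]; try exact: hdot_scalar_l.
  by rewrite -validE; apply: valid; apply/prlp_feasibleE.
exists w => //; apply: hdot_inj => c; rewrite x_eq linear_sum.
by apply: eq_bigr => i _; rewrite linearZ.
Qed.

End PointRay.

Theorem corollary1 (R : realType) (m n k l : nat)
  (A : 'M[R]_(m, n)) (b : 'cV[R]_m) (I : {set 'I_n})
  (pts : 'I_k -> 'cV[R]_n) (rays : 'I_l -> 'cV[R]_n) :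
  rational_mx A -> rational_mx b -> full_dim A b -> pointed A b ->
  (proper_collection A b I pts rays <->
   (forall x, in_PI A b I x -> in_conv_cone pts rays x)).
Proof.
move=> _ _ _ _; split=> [proper x x_PI|PI_conv alpha beta feas x x_PI].
  by apply/in_conv_cone_prlp_valid => alpha beta /proper; apply.
by move/in_conv_cone_prlp_valid: (PI_conv x x_PI); apply.
Qed.
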